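(* Let $(X,d)$ be a compact metric space and $f_{0,\infty}=\{f_n\}_{n=0}^\infty$ a sequence of continuous self-maps of $X$. For $i\ge0$ let $f_{i,\infty}=\{f_n\}_{n=i}^\infty$. Then \[h^{*}(f_{i,\infty})\leq h^{*}(f_{j,\infty}),\quad 0\leq i\leq j<\infty.\]
   Context: $f_i^n=f_{i+n-1}\circ\cdots\circ f_i$ ($n\ge1$), $f_i^0=\mathrm{id}$, $f_i^{-n}(B)=(f_i^n)^{-1}(B)$. $\mathcal S$ is the set of strictly increasing sequences $A=\{a_k\}_{k\ge1}$ of nonnegative integers. The topological sequence entropy of $f_{i,\infty}$ along $A$ is $h_A(f_{i,\infty})=\sup_{\mathscr A}\limsup_{n\to\infty}\frac1n\log\mathcal N(\bigvee_{k=1}^n f_i^{-a_k}\mathscr A)$ over finite open covers $\mathscr A$ ($\bigvee$ = common refinement, $\mathcal N$ = minimal cardinality of a subcover), and $h^*(f_{i,\infty})=\sup_{A\in\mathcal S}h_A(f_{i,\infty})$. *)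

From HB Require Import structures.
From mathcomp Require Import all_boot all_order all_algebra.
From mathcomp Require Import all_classical all_reals all_analysis.
Set Implicit Arguments. Unset Strict Implicit. Unset Printing Implicit Defensive.
Import Order.TTheory GRing.Theory Num.Theory.
Local Open Scope classical_set_scope.
Local Open Scope ring_scope.

Section SeqEntropy.
Context {R : realType} {X : topologicalType}.

Fixpoint nacomp (f : nat -> X -> X) (i n : nat) : X -> X :=
  match n with
  | 0 => id
  | n'.+1 => fun x => f (i + n')%N (nacomp f i n' x)
  end.

Definition open_cover (A : seq (set X)) : Prop :=
  (forall U, U \in A -> open U) /\ (forall x : X, exists2 U, U \in A & U x).

(* common refinement  \/_{k=1}^n f_i^{-a_k} A   (a is indexed from 0:
   a 0, ..., a (n-1) stand for a_1, ..., a_n) *)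
Definition join_cover (f : nat -> X -> X) (i : nat) (a : nat -> nat)
    (A : seq (set X)) (n : nat) : set (set X) :=
  [set B | exists s : nat -> nat,
      (forall k, (k < n)%N -> (s k < size A)%N) /\
      B = \bigcap_(k in [set k | (k < n)%N]) (nacomp f i (a k) @^-1` nth set0 A (s k))].

Definition has_subcover_of_card (U : set (set X)) (m : nat) : Prop :=
  exists s : seq (set X), size s = m /\ (forall V, V \in s -> U V) /\
    (forall x : X, exists2 V, V \in s & V x).

(* N(U): minimal cardinality of a subcover (0 if there is no finite subcover) *)
Definition ncover (U : set (set X)) : nat :=
  match pselect (exists m, has_subcover_of_card U m) with
  | left H => ex_minn (P := fun m => `[< has_subcover_of_card U m >])
                (let: ex_intro m Hm := H in ex_intro _ m (asboolT Hm))
  | right _ => 0%N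
  end.

Definition strict_incr (a : nat -> nat) : Prop := forall m n, (m < n)%N -> (a m < a n)%N.

Definition seq_entropy (f : nat -> X -> X) (i : nat) (a : nat -> nat) : \bar R :=
  ereal_sup [set limn_esup (fun n : nat =>
                 ((ln (ncover (join_cover f i a A n))%:R : R) / n%:R)%:E)
            | A in open_cover].

Definition seq_entropy_star (f : nat -> X -> X) (i : nat) : \bar R :=
  ereal_sup [set seq_entropy f i a | a in strict_incr].

End SeqEntropy.

(** The sequence entropy of f_{i,oo} along a strictly increasing (a_k) is
    bounded by that of f_{i+1,oo} along (a_{k+1} - 1): since a_k >= 1 for
    k >= 1, f_i^{a_k} = f_{i+1}^{a_k - 1} o f_i, so the n-fold join for
    f_{i,oo} is refined by f_i^{-a_1} A joined with the f_i-preimage of the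
    n-fold join for f_{i+1,oo}.  Hence N_n <= |A| N'_n, and the extra
    log |A| / n vanishes in the limsup; so h^*(f_{i,oo}) is nondecreasing in i. *)
From HB Require Import structures.
From mathcomp Require Import all_boot all_order all_algebra.
From mathcomp Require Import all_classical all_reals all_analysis.
From mathcomp Require Import zify.
Set Implicit Arguments. Unset Strict Implicit. Unset Printing Implicit Defensive.
Import Order.TTheory GRing.Theory Num.Theory.
Local Open Scope classical_set_scope.
Local Open Scope ring_scope.

Lemma cvge_div_natr (R : realType) (c : R) :
  (fun n : nat => (c / n%:R)%:E) @ \oo --> 0%E.
Proof.
rewrite -(@cvg_shiftS (\bar R)); apply: cvg_EFin; first exact: nearW.
by rewrite -(mulr0 c); apply: cvgMl_tmp; apply: cvg_harmonic.
Qed.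

Lemma limn_esup_le_add_div (R : realType) (u v : R^nat) (c : R) : 0 <= c ->
  (forall n, u n <= c / n%:R + v n) ->
  (limn_esup (fun n => (u n)%:E) <= limn_esup (fun n => (v n)%:E))%E.
Proof.
move=> c0 uv.
have esups_le m : (0 < m)%N ->
    (esups (EFin \o u) m <= (c / m%:R)%:E + esups (EFin \o v) m)%E.
  move=> m0; apply: ge_ereal_sup => _ [n /= mn <-].
  rewrite (@le_trans _ _ (c / m%:R + v n)%:E) // ?EFinD ?lee_fin.
    rewrite (le_trans (uv n)) // lerD2r ler_wpM2l // lef_pV2 ?posrE ?ltr0n ?ler_nat //.
    exact: leq_trans mn.
  by rewrite leeD2l //; apply: ereal_sup_ubound; exists n.
have sum_cvg : ((fun m => (c / m%:R)%:E) \+ esups (EFin \o v)) @ \oo -->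
    limn (esups (EFin \o v)).
  rewrite -[X in _ --> X]add0e.
  by apply: cvgeD; [| exact: cvge_div_natr | exact: is_cvg_esups].
rewrite !limn_esup_lim -(cvg_lim _ sum_cvg) //.
apply: lee_lim; [exact: is_cvg_esups | exact: cvgP sum_cvg |].
by near=> m; apply: esups_le; near: m; exists 1%N.
Unshelve. all: by end_near. Qed.

Lemma ln_natr_ge0 (R : realType) (m : nat) : 0 <= ln (m%:R : R).
Proof. by case: m => [|m]; [rewrite ln0 | apply: ln_ge0; rewrite ler1n]. Qed.

Lemma ln_natr_le_lnD (R : realType) (a p b : nat) : (a <= p * b)%N ->
  ln (a%:R : R) <= ln (p%:R : R) + ln (b%:R : R).
Proof.
case: a => [|a] le_a_pb; first by rewrite ln0 // addr_ge0 // ln_natr_ge0.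
have /[!muln_gt0] /andP [p0 b0] : (0 < p * b)%N by apply: leq_trans le_a_pb.
rewrite -lnM ?posrE ?ltr0n // -natrM.
by rewrite ler_ln ?posrE ?ltr0n ?muln_gt0 ?p0 ?b0 // ler_nat.
Qed.

Lemma strict_incr_pred_shift (a : nat -> nat) : strict_incr a ->
  strict_incr (fun k => (a k.+1).-1).
Proof.
move=> incr_a m n lt_mn.
have := incr_a m.+1 n.+1 lt_mn; have := incr_a 0%N m.+1 isT.
lia.
Qed.

Section Covers.
Context {T : Type}.

Definition covering (S : seq (set T)) : Prop :=
  forall x, exists2 W, W \in S & W x.

Definition refines (S : seq (set T)) (U : set (set T)) : Prop :=
  forall W, W \in S -> exists2 M, U M & W `<=` M.

Lemma covering_preimage (g : T -> T) (A : seq (set T)) :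
  covering A -> covering (map (preimage g) A).
Proof.
move=> covA x; have [U UA Ugx] := covA (g x).
by exists (g @^-1` U); first exact: map_f.
Qed.

Lemma covering_setI (S S' : seq (set T)) : covering S -> covering S' ->
  covering [seq V `&` W | V <- S, W <- S'].
Proof.
move=> covS covS' x; have [V VS Vx] := covS x; have [W WS' Wx] := covS' x.
by exists (V `&` W); first exact: allpairs_f.
Qed.

End Covers.

Section SubcoverCardinality.
Context {X : topologicalType}.
Implicit Types (U : set (set X)) (S : seq (set X)).

Lemma refines_subcover U S : covering S -> refines S U ->
  has_subcover_of_card U (size S).
Proof.
move=> covS refSU.
have /choice [g gP] : forall W : {W | W \in S}, exists M, U M /\ sval W `<=` M.
  by move=> [W WS]; have [M UM WM] := refSU W WS; exists M.
pose h W := if pselect (W \in S) is left WS then g (exist _ W WS) else W.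
have hP W : W \in S -> U (h W) /\ W `<=` h W.
  by rewrite /h => WS; case: pselect => // WS'; apply: (gP (exist _ W WS')).
exists (map h S); rewrite size_map; split=> //; split.
  by move=> _ /mapP [W WS ->]; case: (hP W WS).
move=> x; have [W WS Wx] := covS x.
by exists (h W); [exact: map_f | case: (hP W WS) => _; apply].
Qed.

Lemma ncoverP U m : has_subcover_of_card U m ->
  has_subcover_of_card U (ncover U) /\ (ncover U <= m)%N.
Proof.
move=> Um; rewrite /ncover; case: pselect => [ex|]; last by case; exists m.
case: ex_minnP => k /asboolP Uk k_min; split=> //.
by apply: k_min; apply/asboolP.
Qed.

End SubcoverCardinality.

Lemma nacompS (X : topologicalType) (f : nat -> X -> X) i n x :
  nacomp f i n.+1 x = nacomp f i.+1 n (f i x).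
Proof. by elim: n => [|n IHn] /=; rewrite ?addn0 // -IHn /= addSnnS. Qed.

Section JoinCover.
Context {X : topologicalType} (f : nat -> X -> X) (A : seq (set X)).

Lemma join_coverS i a n M U : join_cover f i a A n M -> U \in A ->
  exists2 M', join_cover f i a A n.+1 M' & M `&` (nacomp f i (a n) @^-1` U) `<=` M'.
Proof.
move=> [s [sA ->]] UA; pose s' k := if (k < n)%N then s k else index U A.
exists (\bigcap_(k in [set k | (k < n.+1)%N]) (nacomp f i (a k) @^-1` nth set0 A (s' k))).
  exists s'; split=> // k _; rewrite /s'.
  by case: ifP => lt_kn; [exact: sA | rewrite index_mem].
move=> x [Mx Ux] k /= lt_kn1; rewrite /s'; case: ifPn => lt_kn; first exact: Mx.
have -> : k = n by lia.
by rewrite nth_index.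
Qed.

Lemma join_cover_pullback i a n M U : (forall k, 0 < a k.+1)%N ->
  join_cover f i.+1 (fun k => (a k.+1).-1) A n M -> U \in A ->
  exists2 M', join_cover f i a A n M' &
    (nacomp f i (a 0%N) @^-1` U) `&` (f i @^-1` M) `<=` M'.
Proof.
move=> a_gt0 [s [sA ->]] UA; pose s' k := if k is k'.+1 then s k' else index U A.
exists (\bigcap_(k in [set k | (k < n)%N]) (nacomp f i (a k) @^-1` nth set0 A (s' k))).
  exists s'; split=> // -[|k] lt_kn; first by rewrite /= index_mem.
  by apply: sA; apply: ltnW.
move=> x [Ux Mx] [|k] lt_kn /=; first by rewrite nth_index.
by rewrite -(prednK (a_gt0 k)) nacompS; apply: Mx; apply: ltnW.
Qed.

Lemma join_cover_refinement i a n : covering A ->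
  exists S, covering S /\ refines S (join_cover f i a A n).
Proof.
move=> covA; elim: n => [|n [S [covS refS]]].
  exists [:: setT]; split=> [x|W]; first by exists setT; rewrite ?inE.
  rewrite inE => /eqP ->; exists setT => //.
  exists (fun=> 0%N); split=> //; apply/seteqP; split=> // x _ k /=.
exists [seq V `&` W | V <- S, W <- map (preimage (nacomp f i (a n))) A].
split; first by apply: covering_setI => //; apply: covering_preimage.
move=> _ /allpairsP [[V _] [/= VS /mapP [U UA ->] ->]].
have [M joinM VM] := refS V VS; have [M' joinM' MM'] := join_coverS joinM UA.
by exists M' => // x [Vx Ux]; apply: MM'; split => //; apply: VM.
Qed.

Lemma join_cover_subcover i a n : covering A ->
  has_subcover_of_card (join_cover f i a A n) (ncover (join_cover f i a A n)).
Proof.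
move=> /(join_cover_refinement i a n) [S [covS refS]].
exact: (ncoverP (refines_subcover covS refS)).1.
Qed.

Lemma ncover_join_cover_pullback i a n : (forall k, 0 < a k.+1)%N -> covering A ->
  (ncover (join_cover f i a A n) <=
   size A * ncover (join_cover f i.+1 (fun k => (a k.+1).-1) A n))%N.
Proof.
move=> a_gt0 covA.
have [S [<- [SM covS]]] := join_cover_subcover i.+1 (fun k => (a k.+1).-1) n covA.
pose T := [seq V `&` W | V <- map (preimage (nacomp f i (a 0%N))) A,
                         W <- map (preimage (f i)) S].
have covT : covering T by apply: covering_setI; apply: covering_preimage.
have refT : refines T (join_cover f i a A n).
  move=> _ /allpairsP [[_ _] [/= /mapP [U UA ->] /mapP [M MS ->] ->]].
  exact: join_cover_pullback a_gt0 (SM M MS) UA.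
have -> : (size A * size S)%N = size T by rewrite size_allpairs !size_map.
exact: (ncoverP (refines_subcover covT refT)).2.
Qed.

End JoinCover.

Lemma seq_entropy_le_succ (R : realType) (X : topologicalType)
    (f : nat -> X -> X) i a :
  (forall k, 0 < a k.+1)%N ->
  (@seq_entropy R X f i a <= @seq_entropy R X f i.+1 (fun k => (a k.+1).-1))%E.
Proof.
move=> a_gt0; apply: ge_ereal_sup => _ [A coverA <-].
apply: le_trans (ereal_sup_ubound _); last by exists A.
apply: (limn_esup_le_add_div (ln_natr_ge0 _ (size A))) => n.
rewrite -mulrDl ler_wpM2r ?invr_ge0 //.
exact/ln_natr_le_lnD/ncover_join_cover_pullback/coverA.2.
Qed.

Lemma seq_entropy_star_le_succ (R : realType) (X : topologicalType)
    (f : nat -> X -> X) i :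
  (@seq_entropy_star R X f i <= @seq_entropy_star R X f i.+1)%E.
Proof.
apply: ge_ereal_sup => _ [a incr_a <-].
have a_gt0 k : (0 < a k.+1)%N by apply: leq_ltn_trans (incr_a 0%N k.+1 isT).
apply: (le_trans (seq_entropy_le_succ R f i a_gt0)); apply: ereal_sup_ubound.
by exists (fun k => (a k.+1).-1); first exact: strict_incr_pred_shift.
Qed.

Local Open Scope ereal_scope.

Theorem proposition4p5 (R : realType) (X : metricType R)
    (Xcpt : compact [set: X]) (f : nat -> X -> X)
    (fcont : forall n, continuous (f n)) (i j : nat) :
  (i <= j)%N ->
  @seq_entropy_star R X f i <= @seq_entropy_star R X f j.
Proof.
exact: (nondecreasing_seqP _).1 (seq_entropy_star_le_succ R f) i j.
Qed.
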